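(* Consider the recursive algorithm $\mathrm{DST}(I,\widetilde{\mathrm{opt}})$ described in the context, applied to a planar \textsc{Directed Steiner Tree} instance $I=(G=(V,E),c,r,X)$ with positive integer edge costs and an estimate $\widetilde{\mathrm{opt}}$. Let $\ell$ and $o$ be non-negative integers with $|X|\le 2^{\ell}$ and $\widetilde{\mathrm{opt}}\le 2^{o}$. If $\widetilde{\mathrm{opt}}\ge \mathrm{opt}$, where $\mathrm{opt}$ is the optimal value of $I$, then $\mathrm{DST}(I,\widetilde{\mathrm{opt}})$ returns a feasible solution of cost at most $(6\ell+1)\cdot\mathrm{opt}$. Furthermore, the total number of recursive calls made by $\mathrm{DST}(I,\widetilde{\mathrm{opt}})$ and its subsequent recursive calls is at most $|X|\cdot 2^{2\ell+o}$.
   Context: \textsc{Directed Steiner Tree}: digraph $G=(V,E)$ (parallel edges allowed, planar underlying undirected graph) with edge costs $c_e$ (here positive integers), root $r$, terminals $X\subseteq V\setminus\{r\}$; a feasible solution is $F\subseteq E$ containing a directed $r$–$t$ path for each $t\in X$, of cost $\sum_{e\in F}c_e$; $\mathrm{opt}$ is the minimum cost. $d(u,v)$ is the shortest-path distance. Induced subinstances: for a partial arborescence $T$ rooted at $r$ (a directed tree containing $r$ oriented away from $r$) with $C_1,\dots,C_h$ the weakly connected components of $G\setminus T$ (delete vertices of $T$ and incident edges), contract $T$ into $r$ to get $G_{\mathrm{contract}}$, and set $I_{C_i}=(G_{\mathrm{contract}}[C_i\cup\{r\}],c,r,C_i\cap X)$, edges inheriting costs from the edges of $G$ they come from. Algorithm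 $\mathrm{DST}(I,\widetilde{\mathrm{opt}})$: (1) If $\widetilde{\mathrm{opt}}<1$ or $d(r,t)>\widetilde{\mathrm{opt}}$ for some $t\in X$, return infeasible. (2) Else if $|X|=1$, return a shortest directed path from $r$ to the terminal. (3) Otherwise: let $\mathcal F_1=\mathrm{DST}(I,\widetilde{\mathrm{opt}}/2)$ (cost $\infty$ if infeasible). Remove all vertices $v$ with $d(r,v)>\widetilde{\mathrm{opt}}$. Giving each terminal weight $1$ and every other vertex weight $0$, compute (by the planar shortest-path separator) a partial arborescence $T$ that is the union of up to three shortest directed paths starting at $r$ such that each weakly connected component $C_1,\dots,C_h$ of $G\setminus T$ contains at most $|X|/2$ terminals. Let $\mathcal F'_i=\mathrm{DST}(I_{C_i},\widetilde{\mathrm{opt}})$ for each $i$, and $\mathcal F_2$ be the edges of $G$ corresponding to $E(T)\cup\bigcup_i\mathcal F'_i$ (cost $\infty$ if some $\mathcal F'_i$ is infeasible). If both costs are $\infty$ return infeasible; else return the cheaper of $\mathcal F_1,\mathcal F_2$. *)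

From HB Require Import structures.
From mathcomp Require Import all_boot all_order all_algebra.
Set Implicit Arguments. Unset Strict Implicit. Unset Printing Implicit Defensive.
Import Order.TTheory GRing.Theory Num.Theory.

Section DSTDefs.
Variables (V E : finType) (c : E -> nat).

(* An instance: vertex set, edge set, current endpoint maps (contraction
   re-targets endpoints but keeps edge identities, so every edge of a
   subinstance "corresponds" to the edge of G with the same name), root,
   terminals. *)
Record inst := Inst {
  iV : {set V}; iE : {set E};
  itl : E -> V; ihd : E -> V;
  iroot : V; iterm : {set V} }.

Definition cost (F : {set E}) : nat := \sum_(e in F) c e.
Definition pcost (p : seq E) : nat := \sum_(e <- p) c e.

Fixpoint is_walk (tl hd : E -> V) (u : V) (p : seq E) (v : V) : bool :=
  match p with
  | [::] => u == v
  | e :: p' => (tl e == u) && is_walk tl hd (hd e) p' v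
  end.

Definition dpath (I : inst) (F : {set E}) (p : seq E) (u v : V) : bool :=
  [&& is_walk (itl I) (ihd I) u p v,
      all (fun e => e \in F :&: iE I) p &
      uniq (u :: map (ihd I) p)].

Definition feasible (I : inst) (F : {set E}) : Prop :=
  F \subset iE I /\
  forall t, t \in iterm I -> exists p, dpath I F p (iroot I) t.

Definition is_opt (I : inst) (k : nat) : Prop :=
  (exists F, feasible I F /\ cost F = k) /\
  forall F, feasible I F -> k <= cost F.

(* d(u,v) <= x  (so  d(u,v) > x  is  ~ dist_le, including d = infinity) *)
Definition dist_le (I : inst) (u v : V) (x : rat) : Prop :=
  exists p, dpath I (iE I) p u v /\ ((pcost p)%:R <= x)%R.

Definition shortest (I : inst) (p : seq E) (u v : V) : Prop :=
  dpath I (iE I) p u v /\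
  forall q, dpath I (iE I) q u v -> pcost p <= pcost q.

Definition restrict (I : inst) (W : {set V}) : inst :=
  Inst W [set e in iE I | (itl I e \in W) && (ihd I e \in W)]
       (itl I) (ihd I) (iroot I) (iterm I).

Definition part_arb (I : inst) (VT : {set V}) (ET : {set E}) : Prop :=
  [/\ [&& ET \subset iE I, VT \subset iV I & iroot I \in VT],
      (forall e, e \in ET -> (itl I e \in VT) && (ihd I e \in VT)),
      (forall e, e \in ET -> ihd I e != iroot I),
      (forall v, v \in VT -> v != iroot I ->
        #|[set e in ET | ihd I e == v]| = 1) &
      (forall v, v \in VT -> exists p, dpath I ET p (iroot I) v)].

Definition sep_tree (I : inst) (VT : {set V}) (ET : {set E}) : Prop :=
  part_arb I VT ET /\
  exists p1 p2 p3,
    (exists v, shortest I p1 (iroot I) v) /\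
    (exists v, shortest I p2 (iroot I) v) /\
    (exists v, shortest I p3 (iroot I) v) /\
    ET = [set e in p1 ++ p2 ++ p3] /\
    VT = iroot I |: [set v in map (ihd I) (p1 ++ p2 ++ p3)].

Definition wadj (I : inst) (S : {set V}) : rel V := fun u v =>
  [exists e, [&& e \in iE I, itl I e \in S, ihd I e \in S &
     ((itl I e == u) && (ihd I e == v)) || ((itl I e == v) && (ihd I e == u))]].

Definition wcomp (I : inst) (S : {set V}) (u : V) : {set V} :=
  [set v in S | (u \in S) && connect (wadj I S) u v].

Definition rest (I : inst) (VT : {set V}) : {set V} := iV I :\: VT.

Definition balanced (I : inst) (VT : {set V}) : Prop :=
  forall u, u \in rest I VT ->
    (#|wcomp I (rest I VT) u :&: iterm I|).*2 <= #|iterm I|.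

Definition comps (I : inst) (VT : {set V}) : {set {set V}} :=
  [set wcomp I (rest I VT) u | u in rest I VT :&: iterm I].

(* induced subinstance I_C: contract T into r, take G_contract[C + r] *)
Definition subinst (I : inst) (VT : {set V}) (C : {set V}) : inst :=
  let r := iroot I in
  let f := fun v => if v \in VT then r else v in
  Inst (r |: C)
       [set e in iE I | [&& f (itl I e) \in r |: C, f (ihd I e) \in r |: C &
                            ~~ ((itl I e \in VT) && (ihd I e \in VT))]]
       (fun e => f (itl I e)) (fun e => f (ihd I e)) r (C :&: iterm I).

Definition combine (ET : {set E}) (cs : {set {set V}})
    (Fs : {set V} -> option {set E}) : option {set E} :=
  if [forall C in cs, Fs C != None]
  then Some (ET :|: \bigcup_(C in cs) odflt set0 (Fs C))
  else None.

(* R is the cheaper of R1, R2 (None = infeasible = cost infinity) *)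
Definition cheaper (R1 R2 R : option {set E}) : Prop :=
  match R1, R2 with
  | None, None => R = None
  | Some F1, None => R = Some F1
  | None, Some F2 => R = Some F2
  | Some F1, Some F2 =>
      (R = Some F1 /\ cost F1 <= cost F2) \/ (R = Some F2 /\ cost F2 <= cost F1)
  end.

(* DST I x R n : some execution of DST(I, x) returns R (None = infeasible)
   and makes n calls in total (this call included). *)
Inductive DST : inst -> rat -> option {set E} -> nat -> Prop :=
| DST_infeas I x :
    ((x < 1)%R \/ exists t, t \in iterm I /\ ~ dist_le I (iroot I) t x) ->
    DST I x None 1
| DST_single I x t p :
    (1 <= x)%R ->
    (forall t', t' \in iterm I -> dist_le I (iroot I) t' x) ->
    iterm I = [set t] ->
    shortest I p (iroot I) t ->
    DST I x (Some [set e in p]) 1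
| DST_rec I x R1 n1 (W VT : {set V}) (ET : {set E})
    (Fs : {set V} -> option {set E}) (ns : {set V} -> nat) R :
    (1 <= x)%R ->
    (forall t', t' \in iterm I -> dist_le I (iroot I) t' x) ->
    #|iterm I| != 1 ->
    DST I (x / 2%:R)%R R1 n1 ->
    (forall v, v \in W <-> (v \in iV I /\ dist_le I (iroot I) v x)) ->
    sep_tree (restrict I W) VT ET ->
    balanced (restrict I W) VT ->
    (forall C, C \in comps (restrict I W) VT ->
       DST (subinst (restrict I W) VT C) x (Fs C) (ns C)) ->
    cheaper R1 (combine ET (comps (restrict I W) VT) Fs) R ->
    DST I x R (1 + n1 + \sum_(C in comps (restrict I W) VT) ns C).

End DSTDefs.

(* Feasibility: a terminal either lies on the separator tree T, or in a
   component C of G \ T.  In the second case a path of I_C starts with an edge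
   leaving the contracted root, i.e. an edge of G leaving T, so the tree path
   to its tail followed by the rest of the path reaches the terminal in G.
   Cost: fix an optimal F0, so opt <= x.  If 2 opt <= x, the call with x/2 is
   already within the bound.  Otherwise x < 2 opt.  Each r-t path of F0 costs
   at most x and so survives the pruning to d(r, .) <= x; its edges after the
   last vertex on T enter C and form a solution of I_C, and these parts of F0
   are disjoint for distinct components.  As the three shortest paths of T cost
   at most x each and every component holds at most |X|/2 terminals, induction
   on l bounds the cost by 3x + (6(l-1)+1) opt < (6l+1) opt.
   Calls: the call with x/2 makes at most |X| 2^(2l+o-1) calls and the calls on
   the components at most |X| 2^(2l+o-2) together, since their terminal sets
   are disjoint. *)

From mathcomp Require Import all_boot all_order all_algebra.
From mathcomp Require Import zify lra.
Set Implicit Arguments. Unset Strict Implicit. Unset Printing Implicit Defensive.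
Import Order.TTheory GRing.Theory Num.Theory.

Section Costs.
Variables (E : finType) (c : E -> nat).

Lemma cost_subset (A B : {set E}) : A \subset B -> cost c A <= cost c B.
Proof.
move/subsetP=> AB; rewrite /cost [leqLHS]big_mkcond [leqRHS]big_mkcond.
by apply: leq_sum => e _; case: ifP => // /AB ->.
Qed.

Lemma cost_setU (A B : {set E}) : cost c (A :|: B) <= cost c A + cost c B.
Proof.
rewrite /cost (big_setID A) /= setUK setDUl setDv set0U leq_add2l.
exact: (cost_subset (subsetDl B A)).
Qed.

Lemma cost_bigcup (I : finType) (P : {set I}) (G : I -> {set E}) :
  cost c (\bigcup_(i in P) G i) <= \sum_(i in P) cost c (G i).
Proof.
apply: (big_rec2 (fun A n => cost c A <= n)); first by rewrite /cost big_set0.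
by move=> i A n _ h; apply: leq_trans (cost_setU _ _) (leq_add _ h).
Qed.

Lemma pcost_cat (s1 s2 : seq E) : pcost c (s1 ++ s2) = pcost c s1 + pcost c s2.
Proof. exact: big_cat. Qed.

Lemma cost_set_seq (s : seq E) : cost c [set e in s] <= pcost c s.
Proof.
elim: s => [|e s IH]; first by rewrite /cost big_pred0 // => e; rewrite inE.
have -> : [set x in e :: s] = [set e] :|: [set x in s].
  by apply/setP => x; rewrite !inE.
apply: leq_trans (cost_setU _ _) _.
by rewrite /pcost big_cons /cost big_set1 leq_add2l.
Qed.

Lemma pcost_le_cost (s : seq E) (F : {set E}) :
  uniq s -> all (mem F) s -> pcost c s <= cost c F.
Proof.
move=> us /allP sF; rewrite /pcost big_uniq //.
have -> : \sum_(e in s) c e = cost c [set e in s].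
  by apply: eq_bigl => e; rewrite inE.
by apply: cost_subset; apply/subsetP => e; rewrite inE => /sF.
Qed.

End Costs.

Lemma sum_disjoint_preim_le (T U : finType) (P : {set {set U}}) (g : T -> U)
    (w : T -> nat) (A : {set T}) :
  (forall C1 C2 u, C1 \in P -> C2 \in P -> u \in C1 -> u \in C2 -> C1 = C2) ->
  \sum_(C in P) \sum_(x in A | g x \in C) w x <= \sum_(x in A) w x.
Proof.
move=> disjP; rewrite (exchange_big_dep (mem A)) /=; last by move=> C x _ /andP[].
apply: leq_sum => x xA.
rewrite (eq_bigl (mem [set C in P | g x \in C])); last by move=> C; rewrite !inE xA.
rewrite sum_nat_const -[leqRHS]mul1n leq_mul //; apply/card_le1_eqP => C1 C2.
by rewrite !inE => /andP[C1P xC1] /andP[C2P xC2]; apply: disjP C2P C1P xC2 xC1.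
Qed.

Section Walks.
Variables (V E : finType) (tl hd : E -> V).

Lemma is_walk_cat u p1 p2 v :
  is_walk tl hd u (p1 ++ p2) v =
  is_walk tl hd u p1 (last u (map hd p1)) &&
  is_walk tl hd (last u (map hd p1)) p2 v.
Proof. by elim: p1 u => [|e p1 IH] u /=; rewrite ?eqxx // IH andbA. Qed.

Lemma is_walk_rcons u p e v :
  is_walk tl hd u (rcons p e) v = is_walk tl hd u p (tl e) && (hd e == v).
Proof.
by elim: p u => [|e' p IH] u /=; rewrite ?andbT 1?eq_sym // IH andbA.
Qed.

Lemma is_walk_last u p v : is_walk tl hd u p v -> last u (map hd p) = v.
Proof. by elim: p u => [|e p IH] u /=; [move/eqP | case/andP => _ /IH]. Qed.

Lemma is_walk_tl_mem u p v :
  is_walk tl hd u p v -> all (fun e => tl e \in u :: map hd p) p.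
Proof.
elim: p u => [|e p IH] u //= /andP[/eqP-> /IH tails]; rewrite mem_head /=.
by apply: sub_all tails => e' tl_e'; rewrite in_cons tl_e' orbT.
Qed.

Lemma is_walk_last_exit (VT : {set V}) u p v :
  is_walk tl hd u p v -> u \in VT -> v \notin VT ->
  exists p1 e p2, [/\ p = p1 ++ e :: p2, tl e \in VT &
                      all (fun e => hd e \notin VT) (e :: p2)].
Proof.
elim/last_ind: p v => [|p e IH] v; first by move=> /= /eqP-> ->.
rewrite is_walk_rcons => /andP[walk_p /eqP hd_e] uVT vVT.
have [tl_eVT|tl_eVT] := boolP (tl e \in VT).
  by exists p, e, [::]; rewrite cats1 /= hd_e vVT.
have [p1 [e' [p2 [-> tl_e'VT heads]]]] := IH _ walk_p uVT tl_eVT.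
exists p1, e', (rcons p2 e); split => //; first by rewrite rcons_cat.
by rewrite -rcons_cons all_rcons hd_e vVT.
Qed.

End Walks.

Section Paths.
Variables (V E : finType) (c : E -> nat).
Implicit Types (I J : inst V E) (F G : {set E}) (p q : seq E).

Lemma dpath_prefix I F p1 p2 u v :
  dpath I F (p1 ++ p2) u v -> dpath I F p1 u (last u (map (ihd I) p1)).
Proof.
rewrite /dpath is_walk_cat all_cat map_cat -cat_cons cat_uniq.
by case/and3P => /andP[-> _] /andP[-> _] /and3P[-> _ _].
Qed.

Lemma dpath_subset I F G p u v :
  F \subset G -> dpath I F p u v -> dpath I G p u v.
Proof.
move/subsetP=> FG /and3P[walk_p pF uniq_p]; apply/and3P; split => //.
by apply/allP => e /(allP pF); rewrite !inE => /andP[/FG -> ->].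
Qed.

Lemma dpath_iE I F p u v : dpath I F p u v -> dpath I (iE I) p u v.
Proof.
case/and3P => walk_p pF uniq_p; apply/and3P; split => //.
by apply/allP => e /(allP pF); rewrite !inE => /andP[_ ->].
Qed.

Lemma dpath_restrict I (W : {set V}) F p u v :
  dpath (restrict I W) F p u v -> dpath I F p u v.
Proof.
case/and3P => walk_p pF uniq_p; apply/and3P; split => //.
by apply/allP => e /(allP pF); rewrite !inE => /and3P[-> -> _].
Qed.

Lemma dpath_pcost I F p u v : dpath I F p u v -> pcost c p <= cost c F.
Proof.
case/and3P => _ /allP pF /andP[_ /map_uniq uniq_p].
by apply: pcost_le_cost uniq_p _; apply/allP => e /pF; rewrite inE => /andP[].
Qed.

Lemma feasible_pcost I F t :
  feasible I F -> t \in iterm I ->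
  exists p, dpath I F p (iroot I) t /\ pcost c p <= cost c F.
Proof. by move=> [_ reach] /reach[p pt]; exists p; rewrite (dpath_pcost pt). Qed.

Lemma dpath_set_seq I (G : {set E}) p u v :
  dpath I G p u v -> dpath I [set e in p] p u v.
Proof.
case/and3P => walk_p pG uniq_p; apply/and3P; split => //.
by apply/allP => e ep; rewrite !inE ep; case/setIP: (allP pG e ep).
Qed.

Lemma dist_le_prefix I G p1 p2 u v (x : rat) :
  dpath I G (p1 ++ p2) u v -> ((pcost c (p1 ++ p2))%:R <= x)%R ->
  dist_le c I u (last u (map (ihd I) p1)) x.
Proof.
move=> p_v px; exists p1; split; first exact: dpath_iE (dpath_prefix p_v).
by apply: le_trans px; rewrite ler_nat pcost_cat leq_addr.
Qed.

Lemma feasible_dist_le I F t (x : rat) :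
  feasible I F -> t \in iterm I -> ((cost c F)%:R <= x)%R ->
  dist_le c I (iroot I) t x.
Proof.
move=> feasF tX Fx; have [p [p_t pF]] := feasible_pcost feasF tX.
by exists p; split; [exact: dpath_iE p_t | apply: le_trans Fx; rewrite ler_nat].
Qed.

Lemma feasible_cost_gt0 I F :
  (forall e, 0 < c e) -> iroot I \notin iterm I -> iterm I != set0 ->
  feasible I F -> 0 < cost c F.
Proof.
move=> c_gt0 rX /set0Pn[t tX] feasF; have [p [p_t pF]] := feasible_pcost feasF tX.
case: p p_t pF => [|e p] p_t pF.
  by case/and3P: p_t => /eqP rt; rewrite rt tX in rX.
by apply: leq_trans pF; rewrite /pcost big_cons (leq_trans (c_gt0 e)) ?leq_addr.
Qed.

End Paths.

Section Components.
Variables (V E : finType).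
Implicit Types (I : inst V E) (S VT C : {set V}).

Lemma wadj_sym I S : symmetric (wadj I S).
Proof.
move=> u v; apply/existsP/existsP => -[e adj_e]; exists e; move: adj_e;
  by case/and4P => -> -> -> /=; rewrite orbC.
Qed.

Lemma wcomp_self I S u : u \in S -> u \in wcomp I S u.
Proof. by move=> uS; rewrite inE uS connect0. Qed.

Lemma wcomp_eq I S u v : v \in wcomp I S u -> wcomp I S v = wcomp I S u.
Proof.
rewrite inE => /and3P[vS uS uv]; apply/setP => w; rewrite !inE vS uS /=.
have sym := sym_connect_sym (wadj_sym I S).
apply: andb_id2l => _; apply/idP/idP => [vw|uw]; first exact: connect_trans uv vw.
by apply: connect_trans _ uw; rewrite sym.
Qed.

Lemma wcomp_connect I S u v w :
  v \in wcomp I S u -> w \in S -> connect (wadj I S) w v -> w \in wcomp I S u.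
Proof.
rewrite !inE => /and3P[_ uS uv] wS wv; rewrite wS uS /=.
by apply: connect_trans uv _; rewrite (sym_connect_sym (wadj_sym I S)).
Qed.

Lemma comps_notin I VT C v : C \in comps I VT -> v \in C -> v \notin VT.
Proof. by case/imsetP => u _ ->; rewrite !inE => /andP[/andP[]]. Qed.

Lemma comps_disjoint I VT C1 C2 w :
  C1 \in comps I VT -> C2 \in comps I VT -> w \in C1 -> w \in C2 -> C1 = C2.
Proof. by move=> /imsetP[u1 _ ->] /imsetP[u2 _ ->] /wcomp_eq <- /wcomp_eq <-. Qed.

Lemma comps_term I VT C : C \in comps I VT -> C :&: iterm I != set0.
Proof.
case/imsetP => u; rewrite inE => /andP[u_rest uX] ->.
by apply/set0Pn; exists u; rewrite inE uX andbT wcomp_self.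
Qed.

Lemma sum_card_comps_term I VT :
  \sum_(C in comps I VT) #|C :&: iterm I| <= #|iterm I|.
Proof.
rewrite -sum1_card; apply: leq_trans (sum_disjoint_preim_le id (fun=> 1) _ _).
  apply: leq_sum => C _; rewrite -sum1_card.
  by apply/eq_leq/eq_bigl => v; rewrite !inE andbC.
exact: comps_disjoint.
Qed.

Lemma is_walk_connect I S p w t :
  is_walk (itl I) (ihd I) w p t -> w \in S ->
  all (fun e => (e \in iE I) && (ihd I e \in S)) p ->
  connect (wadj I S) w t /\ all (fun e => connect (wadj I S) (ihd I e) t) p.
Proof.
elim: p w => [|e p IH] w /=; first by move=> /eqP-> _ _; rewrite connect0.
case/andP => /eqP tl_e walk_p wS /andP[/andP[eI hd_eS] pS].
have [hd_e_t heads] := IH _ walk_p hd_eS pS; split; last by rewrite hd_e_t.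
apply: connect_trans hd_e_t; apply: connect1; apply/existsP; exists e.
by rewrite eI tl_e wS hd_eS !eqxx.
Qed.

Lemma is_walk_comps I VT C p w t :
  C \in comps I VT -> t \in C -> is_walk (itl I) (ihd I) w p t -> w \in rest I VT ->
  all (fun e => (e \in iE I) && (ihd I e \in rest I VT)) p ->
  w \in C /\ all (fun e => ihd I e \in C) p.
Proof.
move=> /imsetP[u _ ->] tC walk_p w_rest p_rest.
have [w_t heads_t] := is_walk_connect walk_p w_rest p_rest.
split; first exact: wcomp_connect tC w_rest w_t.
apply/allP => e ep; apply: wcomp_connect tC _ (allP heads_t e ep).
by case/andP: (allP p_rest e ep).
Qed.

End Components.

Section Subinstances.
Variables (V E : finType).
Implicit Types (J : inst V E) (VT C : {set V}) (F : {set E}).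

Lemma subinst_edge J VT C e :
  C \in comps J VT -> e \in iE J -> (itl J e \in VT) || (itl J e \in C) ->
  ihd J e \in C -> e \in iE (subinst J VT C).
Proof.
move=> CJ eJ tl_e hd_eC; have hd_eVT := comps_notin CJ hd_eC.
rewrite /= inE eJ (negbTE hd_eVT) andbF !in_setU1 hd_eC orbT /= andbT.
by case: ifP tl_e => [_ _|_ /= ->]; rewrite ?eqxx ?orbT.
Qed.

Lemma map_ihd_subinst J VT C s :
  all (fun e => ihd J e \notin VT) s -> map (ihd (subinst J VT C)) s = map (ihd J) s.
Proof. by move/allP=> heads; apply/eq_in_map => e /heads /= /negbTE ->. Qed.

Lemma is_walk_subinst J VT C q w t :
  iroot J \in VT -> w \notin VT -> all (fun e => ihd J e \notin VT) q ->
  is_walk (itl (subinst J VT C)) (ihd (subinst J VT C)) w q t =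
  is_walk (itl J) (ihd J) w q t.
Proof.
move=> rVT; elim: q w => [|e q IH] w //= wVT /andP[hd_eVT heads].
rewrite (negbTE hd_eVT) IH //; congr andb.
have neq_w v : v \in VT -> (v == w) = false.
  by move=> vVT; apply: contraNF wVT => /eqP <-.
by case: ifP => // /neq_w ->; rewrite neq_w.
Qed.

Lemma subinst_dpath_lift J VT ET C FC q t :
  part_arb J VT ET -> t \notin VT ->
  dpath (subinst J VT C) FC q (iroot J) t ->
  exists p, dpath J (ET :|: FC) p (iroot J) t.
Proof.
move=> [/and3P[_ _ rVT] ET_VT _ _ tree] tVT.
case: q => [|e q] /and3P[walk_q qFC uniq_q].
  by move: walk_q tVT => /eqP <-; rewrite rVT.
move: uniq_q; rewrite cons_uniq => /andP[r_notin_heads uniq_heads].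
have heads : all (fun e => ihd J e \notin VT) (e :: q).
  apply/allP => e' e'q; apply: contraNN r_notin_heads => hd_e'VT.
  by apply/mapP; exists e' => //=; rewrite hd_e'VT.
have [hd_eVT heads_q] := andP heads.
move: walk_q => /= /andP[/eqP tl_e]; rewrite (negbTE hd_eVT) is_walk_subinst //.
move=> walk_q; have tl_eVT : itl J e \in VT.
  by move: rVT; case: ifP tl_e => // tl_eNVT <-; rewrite tl_eNVT.
have [p0 /and3P[walk_p0 p0ET uniq_p0]] := tree _ tl_eVT.
exists (p0 ++ e :: q); apply/and3P; split.
- by rewrite is_walk_cat (is_walk_last walk_p0) walk_p0 /= eqxx.
- rewrite all_cat; apply/andP; split.
    by apply: sub_all p0ET => e'; rewrite !inE => /andP[-> ->].
  by apply: sub_all qFC => e'; rewrite !inE => /andP[-> /andP[-> _]]; rewrite orbT.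
- rewrite map_cat -cat_cons cat_uniq uniq_p0 andTb; apply/andP; split.
    apply/hasPn => v /mapP[e' /(allP heads) hd_e'VT ->] /=.
    apply: contra hd_e'VT; rewrite inE => /predU1P[->//|/mapP[e'' e''p0 ->]].
    by case/setIP: (allP p0ET e'' e''p0) => /ET_VT/andP[].
  by rewrite -(map_ihd_subinst C heads).
Qed.

(* Requiring the head in [C] makes the sets for distinct components disjoint. *)
Definition sub_solution J VT C F : {set E} :=
  [set e in F | (e \in iE (subinst J VT C)) && (ihd J e \in C)].

Lemma sub_solution_dpath J VT C F p t :
  (forall e, e \in iE J -> ihd J e \in iV J) ->
  iroot J \in VT -> C \in comps J VT -> t \in C ->
  dpath J F p (iroot J) t ->
  exists q, dpath (subinst J VT C) (sub_solution J VT C F) q (iroot J) t.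
Proof.
move=> hdV rVT CJ tC /and3P[walk_p pF uniq_p].
have [p1 [e [p2 [def_p tl_eVT heads]]]] :=
  is_walk_last_exit walk_p rVT (comps_notin CJ tC).
move: walk_p pF uniq_p; rewrite def_p is_walk_cat all_cat map_cat -cat_cons cat_uniq.
move=> /andP[_ walk_ep2] /andP[_ ep2F] /and3P[_ _ uniq_heads].
have /andP[_ walk_p2] := walk_ep2; have [hd_eVT heads_p2] := andP heads.
have in_rest : all (fun e => (e \in iE J) && (ihd J e \in rest J VT)) (e :: p2).
  apply/allP => e' e'p; have /setIP[_ e'J] := allP ep2F e' e'p.
  by rewrite e'J !inE (allP heads e' e'p) hdV.
have [/andP[_ hd_e_rest] p2_rest] := andP in_rest.
have [hd_eC p2C] := is_walk_comps CJ tC walk_p2 hd_e_rest p2_rest.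
have inC : all (fun e => ihd J e \in C) (e :: p2) by rewrite /= hd_eC.
have walk_tl_e : is_walk (itl J) (ihd J) (itl J e) (e :: p2) t by rewrite /= eqxx.
have tails := is_walk_tl_mem walk_tl_e.
exists (e :: p2); apply/and3P; split.
- by rewrite /= tl_eVT eqxx (negbTE hd_eVT) is_walk_subinst.
- apply/allP => e' e'p; have /setIP[e'F e'J] := allP ep2F e' e'p.
  have hd_e'C := allP inC e' e'p.
  have e'sub : e' \in iE (subinst J VT C).
    apply: subinst_edge CJ e'J _ hd_e'C.
    move: (allP tails e' e'p); rewrite in_cons => /predU1P[->|/mapP[e'' e''p ->]].
      by rewrite tl_eVT.
    by rewrite (allP inC) ?orbT.
  by rewrite in_setI e'sub andbT in_set e'F e'sub hd_e'C.
- rewrite cons_uniq map_ihd_subinst // uniq_heads andbT.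
  by apply/mapP => -[e' /(allP heads) hd_e'VT r_hd]; rewrite -r_hd rVT in hd_e'VT.
Qed.

End Subinstances.

Section Pruning.
Variables (V E : finType) (c : E -> nat) (I : inst V E) (W : {set V}) (x : rat).
Hypothesis wfI : forall e, e \in iE I -> (itl I e \in iV I) && (ihd I e \in iV I).
Hypothesis defW : forall v, v \in W <-> v \in iV I /\ dist_le c I (iroot I) v x.

Lemma dpath_pruned (G : {set E}) q v :
  dpath I G q (iroot I) v -> ((pcost c q)%:R <= x)%R ->
  dpath (restrict I W) G q (iroot I) v.
Proof.
move=> q_v qx.
have in_W q1 e q2 : q = q1 ++ e :: q2 -> (itl I e \in W) && (ihd I e \in W).
  move=> def_q; rewrite def_q in q_v qx.
  have /and3P[walk_q qG _] := q_v.
  have e_q : e \in q1 ++ e :: q2 by rewrite mem_cat mem_head orbT.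
  have /setIP[_ /wfI/andP[tlV hdV]] := allP qG e e_q.
  move: walk_q; rewrite is_walk_cat => /andP[_ /andP[/eqP tl_e _]].
  apply/andP; split; apply/defW; split => //.
    by rewrite tl_e; exact: dist_le_prefix q_v qx.
  have -> : ihd I e = last (iroot I) (map (ihd I) (rcons q1 e)).
    by rewrite map_rcons last_rcons.
  by rewrite -cat_rcons in q_v qx; exact: dist_le_prefix q_v qx.
case/and3P: q_v => walk_q qG uniq_q; apply/and3P; split => //.
apply/allP => e eq; have := allP qG e eq; rewrite !inE => /andP[-> ->] /=.
by case/splitPr: eq in_W => q1 q2 /(_ q1 e q2 erefl).
Qed.

Lemma shortest_pcost_le p v :
  (1 <= x)%R -> shortest c (restrict I W) p (iroot I) v -> ((pcost c p)%:R <= x)%R.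
Proof.
move=> x_ge1 [/and3P[walk_p pE _] p_min].
case: p walk_p pE p_min => [|e p] walk_p pE p_min.
  by rewrite /pcost big_nil; apply: le_trans x_ge1.
have vW : v \in W.
  have /mapP[e' e'p ->] : v \in map (ihd I) (e :: p).
    by rewrite -(is_walk_last walk_p) /= mem_last.
  by case/setIP: (allP pE e' e'p); rewrite inE => _ /and3P[].
have [_ [q [q_v qx]]] := (defW v).1 vW.
have q_pruned := dpath_iE (dpath_pruned q_v qx).
by apply: le_trans qx; rewrite ler_nat p_min.
Qed.

Lemma sep_tree_cost (VT : {set V}) (ET : {set E}) :
  (1 <= x)%R -> sep_tree c (restrict I W) VT ET -> ((cost c ET)%:R <= 3%:R * x)%R.
Proof.
move=> x_ge1 [_ [p1 [p2 [p3 [[v1 p1_min] [[v2 p2_min] [[v3 p3_min] [-> _]]]]]]]].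
apply: (@le_trans _ _ (pcost c (p1 ++ p2 ++ p3))%:R%R).
  by rewrite ler_nat cost_set_seq.
have := shortest_pcost_le x_ge1 p1_min; have := shortest_pcost_le x_ge1 p2_min.
have := shortest_pcost_le x_ge1 p3_min; rewrite !pcost_cat !natrD; lra.
Qed.

Lemma sub_solution_feasible (VT C : {set V}) (F : {set E}) :
  iroot I \in VT -> C \in comps (restrict I W) VT ->
  feasible I F -> ((cost c F)%:R <= x)%R ->
  feasible (subinst (restrict I W) VT C) (sub_solution (restrict I W) VT C F).
Proof.
move=> rVT CJ feasF Fx; split.
  by apply/subsetP => e; rewrite inE => /andP[_ /andP[]].
move=> t; rewrite /= inE => /andP[tC tX].
have [p [p_t pF]] := feasible_pcost c feasF tX.
have hdW e : e \in iE (restrict I W) -> ihd I e \in W by rewrite inE => /and3P[].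
have px : ((pcost c p)%:R <= x)%R by apply: le_trans Fx; rewrite ler_nat.
exact: sub_solution_dpath hdW rVT CJ tC (dpath_pruned p_t px).
Qed.

End Pruning.

Section Combination.
Variables (V E : finType) (c : E -> nat).
Implicit Types (I J : inst V E) (VT C : {set V}) (F ET : {set E}).

Lemma feasible_restrict I (W : {set V}) F : feasible (restrict I W) F -> feasible I F.
Proof.
move=> [Fsub reach]; split.
  by apply: subset_trans Fsub _; apply/subsetP => e; rewrite inE => /andP[].
by move=> t /reach[p p_t]; exists p; exact: dpath_restrict p_t.
Qed.

Lemma combine_feasible J VT ET (Fs : {set V} -> option {set E}) F :
  iterm J \subset iV J -> part_arb J VT ET ->
  (forall C FC, C \in comps J VT -> Fs C = Some FC ->
     feasible (subinst J VT C) FC) ->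
  combine ET (comps J VT) Fs = Some F -> feasible J F.
Proof.
move=> XV arbT subfeas; rewrite /combine; case: ifP => // /forallP allFs [<-].
have [/and3P[ETJ _ _] _ _ _ tree] := arbT.
split.
  rewrite subUset ETJ; apply/bigcupsP => C CJ.
  case FsC: (Fs C) => [FC|] /=; last exact: sub0set.
  have [FCsub _] := subfeas C FC CJ FsC; apply: subset_trans FCsub _.
  by apply/subsetP => e; rewrite inE => /andP[].
move=> t tX; have [tVT|tNVT] := boolP (t \in VT).
  by have [p p_t] := tree t tVT; exists p; apply: dpath_subset p_t; exact: subsetUl.
set C := wcomp J (rest J VT) t.
have t_rest : t \in rest J VT by rewrite inE tNVT (subsetP XV).
have CJ : C \in comps J VT by apply/imsetP; exists t; rewrite // inE t_rest.
move: (allFs C); rewrite CJ /=; case FsC: (Fs C) => [FC|] // _.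
have [_ reach] := subfeas C FC CJ FsC.
have tXC : t \in iterm (subinst J VT C) by rewrite /= inE wcomp_self.
have [q q_t] := reach t tXC.
have [p p_t] := subinst_dpath_lift arbT tNVT q_t.
exists p; apply: dpath_subset p_t; apply: setUS.
by have := @bigcup_sup _ _ C _ (fun C => odflt set0 (Fs C)) CJ; rewrite FsC.
Qed.

Lemma sum_cost_sub_solution J VT F :
  \sum_(C in comps J VT) cost c (sub_solution J VT C F) <= cost c F.
Proof.
apply: leq_trans (sum_disjoint_preim_le (ihd J) c F (@comps_disjoint _ _ J VT)).
apply: leq_sum => C _.
have -> : \sum_(e in F | ihd J e \in C) c e = cost c [set e in F | ihd J e \in C].
  by apply: eq_bigl => e; rewrite inE.
by apply: cost_subset; apply/subsetP => e; rewrite !inE => /andP[-> /andP[_ ->]].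
Qed.

Lemma combine_cost J VT ET (Fs : {set V} -> option {set E}) F0 k :
  (forall C, C \in comps J VT -> exists2 FC, Fs C = Some FC &
     cost c FC <= k * cost c (sub_solution J VT C F0)) ->
  exists2 F, combine ET (comps J VT) Fs = Some F &
    cost c F <= cost c ET + k * cost c F0.
Proof.
move=> FsC_le; have allFs : [forall C in comps J VT, Fs C != None].
  by apply/forallP => C; apply/implyP => /FsC_le[FC ->].
rewrite /combine allFs; eexists; first reflexivity.
apply: leq_trans (cost_setU c _ _) _; rewrite leq_add2l.
apply: leq_trans (cost_bigcup c _ _) _.
apply: (@leq_trans (\sum_(C in comps J VT) k * cost c (sub_solution J VT C F0))).
  by apply: leq_sum => C /FsC_le[FC -> /=].
by rewrite -big_distrr leq_mul2l sum_cost_sub_solution orbT.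
Qed.

Lemma cheaper_le_left R1 R2 R F1 :
  cheaper c R1 R2 R -> R1 = Some F1 -> exists2 F, R = Some F & cost c F <= cost c F1.
Proof.
move=> cheap R1F; move: cheap; rewrite R1F.
by case: R2 => [F2|] /= => [[[-> _]|[-> F21]]|->]; [exists F1 | exists F2 | exists F1].
Qed.

Lemma cheaper_le_right R1 R2 R F2 :
  cheaper c R1 R2 R -> R2 = Some F2 -> exists2 F, R = Some F & cost c F <= cost c F2.
Proof.
move=> cheap R2F; move: cheap; rewrite R2F.
by case: R1 => [F1|] /= => [[[-> F12]|[-> _]]|->]; [exists F1 | exists F2 | exists F2].
Qed.

Lemma cheaper_some R1 R2 R F :
  cheaper c R1 R2 R -> R = Some F -> R1 = Some F \/ R2 = Some F.
Proof.
move=> cheap RF; move: cheap; rewrite RF.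
case: R1 => [F1|]; case: R2 => [F2|] //=.
- by case=> -[<- _]; [left | right].
- by move=> <-; left.
- by move=> <-; right.
Qed.

End Combination.

Section Algorithm.
Variables (V E : finType) (c : E -> nat).
Implicit Types (I J : inst V E) (W VT C : {set V}) (F : {set E}).

Definition proper_inst I : Prop :=
  [/\ iroot I \notin iterm I, iterm I != set0 &
      forall e, e \in iE I -> (itl I e \in iV I) && (ihd I e \in iV I)].

Lemma proper_subinst I W VT C :
  iroot I \in VT -> C \in comps (restrict I W) VT ->
  proper_inst (subinst (restrict I W) VT C).
Proof.
move=> rVT CJ; split.
- have rC : iroot I \notin C by apply: contraTN rVT => /(comps_notin CJ).
  by rewrite /= inE (negbTE rC).
- exact: comps_term CJ.
- by move=> e; rewrite /= inE => /andP[_ /and3P[-> -> _]].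
Qed.

Lemma card_subinst_term J VT C l :
  balanced J VT -> C \in comps J VT -> #|iterm J| <= 2 ^ l.+1 ->
  #|iterm (subinst J VT C)| <= 2 ^ l.
Proof.
move=> bal /imsetP[u /setIP[u_rest _] ->] Xl; rewrite -leq_double.
by apply: leq_trans (bal u u_rest) _; rewrite -mul2n -expnS.
Qed.

Lemma sub_solution_subset J VT C F : sub_solution J VT C F \subset F.
Proof. by apply/subsetP => e; rewrite inE => /andP[]. Qed.

Lemma DST_calls_lt1 I x R n : DST c I x R n -> (x < 1)%R -> n = 1.
Proof. by case=> // *; exfalso; lra. Qed.

Lemma DST_feasible I x R n :
  DST c I x R n -> iterm I \subset iV I -> forall F, R = Some F -> feasible I F.
Proof.
elim=> {I x R n} // [I x t p _ _ Xt [p_t _] _ F [<-] |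
  I x R1 n1 W VT ET Fs ns R _ dist_X _ _ IH1 defW [arbT _] _ _ IHs cheap XV F RF].
  split; last by move=> t'; rewrite Xt inE => /eqP->; exists p; exact: dpath_set_seq p_t.
  apply/subsetP => e; rewrite inE => ep.
  by case/and3P: p_t => _ /allP /(_ e ep) /setIP[].
have XW : iterm (restrict I W) \subset iV (restrict I W).
  by apply/subsetP => t tX; apply/defW; split; [exact: (subsetP XV) | exact: dist_X].
have subfeas C FC : C \in comps (restrict I W) VT -> Fs C = Some FC ->
    feasible (subinst (restrict I W) VT C) FC.
  move=> CJ; apply: IHs CJ _ _.
  by apply/subsetP => v; rewrite /= !inE => /andP[-> _]; rewrite orbT.
have [R1F|combF] := cheaper_some cheap RF; first exact: IH1 XV F R1F.
exact: feasible_restrict (combine_feasible XW arbT subfeas combF).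
Qed.

Lemma DST_cost I x R n :
  (forall e, 0 < c e) -> DST c I x R n -> proper_inst I ->
  forall F0, feasible I F0 -> ((cost c F0)%:R <= x)%R ->
  forall l, #|iterm I| <= 2 ^ l ->
  exists2 F, R = Some F & cost c F <= (6 * l + 1) * cost c F0.
Proof.
move=> c_gt0; elim=> {I x R n}
  [I x infeas | I x t p _ _ Xt [_ p_min] |
   I x R1 n1 W VT ET Fs ns R x_ge1 _ X_ne1 _ IH1 defW sepT bal _ IHs cheap]
  [rX Xne wfI] F0 feasF0 F0x l Xl.
- exfalso; case: infeas => [x_lt1|[t [tX not_dist]]].
    by have := feasible_cost_gt0 c_gt0 rX Xne feasF0; rewrite -(ler_nat rat); lra.
  exact/not_dist/(feasible_dist_le feasF0 tX F0x).
- exists [set e in p] => //; apply: leq_trans (cost_set_seq c p) _.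
  have tX : t \in iterm I by rewrite Xt inE.
  have [q [q_t qF0]] := feasible_pcost c feasF0 tX.
  apply: leq_trans (p_min q (dpath_iE q_t)) _; apply: leq_trans qF0 _.
  by rewrite leq_pmull // addn1.
(* Either the estimate x/2 is still at least opt, or T costs at most 3x < 6 opt. *)
have [halved|x_lt] := lerP ((2 * cost c F0)%:R) x.
  have F0x2 : ((cost c F0)%:R <= x / 2)%R by move: halved; rewrite natrM; lra.
  have [F1 R1F F1c] := IH1 (And3 rX Xne wfI) F0 feasF0 F0x2 l Xl.
  have [F RF FF1] := cheaper_le_left cheap R1F.
  by exists F => //; apply: leq_trans FF1 F1c.
have rVT : iroot I \in VT by case: sepT => -[/and3P[]].
case: l Xl => [|l] Xl; first by move: X_ne1 Xne; rewrite -card_gt0; lia.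
have comps_ok C : C \in comps (restrict I W) VT -> exists2 FC, Fs C = Some FC &
    cost c FC <= (6 * l + 1) * cost c (sub_solution (restrict I W) VT C F0).
  move=> CJ; apply: (IHs C CJ (proper_subinst rVT CJ) _
    (sub_solution_feasible wfI defW rVT CJ feasF0 F0x) _ l).
    by apply: le_trans F0x; rewrite ler_nat cost_subset ?sub_solution_subset.
  exact: card_subinst_term bal CJ Xl.
have [F2 combF2 F2c] := combine_cost ET comps_ok.
have ETc : cost c ET < 6 * cost c F0.
  have := sep_tree_cost wfI defW x_ge1 sepT.
  by rewrite -(ltr_nat rat) natrM; move: x_lt; rewrite natrM; lra.
have [F RF FF2] := cheaper_le_right cheap combF2.
by exists F => //; lia.
Qed.

Lemma DST_calls I x R n :
  DST c I x R n -> iterm I != set0 ->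
  forall l o, #|iterm I| <= 2 ^ l -> (x <= 2%:R ^+ o)%R ->
  n <= #|iterm I| * 2 ^ (2 * l + o).
Proof.
elim=> {I x R n} [I x _ | I x t p _ _ _ _ |
  I x R1 n1 W VT ET Fs ns R _ _ X_ne1 D1 IH1 _ _ bal _ IHs _] Xne l o Xl xo;
  try by rewrite muln_gt0 expn_gt0 card_gt0 Xne.
case: l Xl => [|l] Xl; first by move: X_ne1 Xne; rewrite -card_gt0; lia.
set X := iterm I; set P := 2 ^ (2 * l + o).
have XP : 0 < #|X| * P by rewrite muln_gt0 expn_gt0 card_gt0 Xne.
have sum_ns : \sum_(C in comps (restrict I W) VT) ns C <= #|X| * P.
  apply: (@leq_trans (\sum_(C in comps (restrict I W) VT) #|C :&: X| * P)).
    apply: leq_sum => C CJ.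
    exact: (IHs C CJ (comps_term CJ) l o (card_subinst_term bal CJ Xl) xo).
  by rewrite -big_distrl leq_mul2r sum_card_comps_term orbT.
have n1_le : n1 <= #|X| * (2 * P).
  case: o xo @P XP sum_ns => [|o] xo P XP sum_ns.
    (* x <= 1, so the call with x/2 is rejected by its first test. *)
    have -> : n1 = 1 by apply: (DST_calls_lt1 D1); rewrite expr0 in xo; lra.
    by move: XP; lia.
  have xo' : (x / 2 <= 2%:R ^+ o)%R by rewrite exprS in xo; lra.
  by have := IH1 Xne l.+1 o Xl xo'; rewrite /P -expnS; congr (_ <= _ * 2 ^ _); lia.
have -> : 2 * l.+1 + o = (2 * l + o).+2 by lia.
by rewrite !expnS -/P; lia.
Qed.

End Algorithm.

Theorem lemma3 (V E : finType) (tl hd : E -> V) (c : E -> nat) (r : V)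
    (X : {set V}) (l o optv : nat) (optt : rat) :
  (forall e, 0 < c e) ->
  r \notin X ->
  X != set0 ->
  #|X| <= 2 ^ l ->
  (optt <= 2%:R ^+ o)%R ->
  is_opt c (Inst [set: V] [set: E] tl hd r X) optv ->
  (optv%:R <= optt)%R ->
  forall res n, DST c (Inst [set: V] [set: E] tl hd r X) optt res n ->
  exists F, [/\ res = Some F,
    feasible (Inst [set: V] [set: E] tl hd r X) F,
    cost c F <= (6 * l + 1) * optv &
    n <= #|X| * 2 ^ (2 * l + o)].
Proof.
move=> c_gt0 rX Xne Xl optt_le [[F0 [feasF0 <-]] _] F0_le res n run.
have properI : proper_inst (Inst [set: V] [set: E] tl hd r X).
  by split => // e _; rewrite !inE.
have [F resF Fcost] := DST_cost c_gt0 run properI feasF0 F0_le Xl.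
exists F; split => //.
- exact: DST_feasible run (subsetT _) F resF.
- exact: (DST_calls run Xne Xl optt_le).
Qed.
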